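(* Consider the AdaDROPS scheme described in the context (with either Option I or Option II as the support-update rule), and let $\bar{\mathcal{I}}\subseteq\{1,\dots,N\}$ be the set at which the nondecreasing sequence $\mathcal{I}^{(k)}$ eventually stabilizes. Assume the iterates $x^{(k)}$ converge to a point $\tilde{x}$ which is a minimizer of the restricted problem $$\min_{x\in\mathbb{R}^n}\ \frac{1}{2\lambda}\|AP_{\bar T}x-y\|^2+\|LP_{\bar T}x\|_{1,2}$$ and satisfies $\tilde{x}_i=0$ for all $i\notin\bar{\mathcal{E}}$. Then $\tilde{x}$ is a global minimizer of the original problem $$\min_{x\in\mathbb{R}^n}\ \frac{1}{2\lambda}\|Ax-y\|^2+\|Lx\|_{1,2}.$$
   Context: Let $n,N\in\mathbb{N}$, let $G_1,\dots,G_N\subseteq\{1,\dots,n\}$ be nonempty groups, possibly overlapping, with $\bigcup_iG_i=\{1,\dots,n\}$, and weights $w_i>0$. $x_G$ denotes the subvector of $x$ indexed by $G$ (increasing order). Let $p=\sum_i|G_i|$, partition $\{1,\dots,p\}$ into consecutive blocks $J_i=\{\sum_{j<i}|G_j|+1,\dots,\sum_{j\le i}|G_j|\}$, and define the lifting operator $L\in\mathbb{R}^{p\times n}$ by $(Lx)_{J_i}=w_ix_{G_i}$; for $z\in\mathbb{R}^p$, $\|z\|_{1,2}=\sum_i\|z_{J_i}\|$ (Euclidean norms). Let $A\in\mathbb{R}^{m\times n}$, $y\in\mathbb{R}^m$, $\lambda>0$. For an index set $\mathcal{I}\subseteq\{1,\dots,N\}$ define $\mathcal{E}(\mathcal{I})=\{1,\dots,n\}\setminus\bigcup_{t\notin\mathcal{I}}G_t$,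 $T(\mathcal{I})=\{x\in\mathbb{R}^n:\mathrm{supp}(x)\subseteq\mathcal{E}(\mathcal{I})\}$, $\mathcal{E}_z(\mathcal{I})=\bigcup_{t\in\mathcal{I}}J_t$, $T_z(\mathcal{I})=\{z\in\mathbb{R}^p:\mathrm{supp}(z)\subseteq\mathcal{E}_z(\mathcal{I})\}$, and $\widehat{L}(\mathcal{I})=L-P_{T_z(\mathcal{I})}LP_{T(\mathcal{I})^\perp}$, where $P_T$ is the orthogonal (coordinate) projection onto $T$ and $T^\perp$ its orthogonal complement; $\widehat{L}(\mathcal{I})^\top\widehat{L}(\mathcal{I})$ is invertible. AdaDROPS scheme: starting from some $\mathcal{I}^{(0)}$ and $x^{(0)}$, at step $k$ an inner solver produces $x^{(k+1)}$ (for the problem restricted to $T(\mathcal{I}^{(k)})$, i.e. with $A,L$ replaced by $AP_{T(\mathcal{I}^{(k)})},LP_{T(\mathcal{I}^{(k)})}$); then with $\beta^{(k+1)}=-\frac1\lambda A^\top(Ax^{(k+1)}-y)$ the index set is updated by Option I: $\mathcal{I}^{(k+1)}=\mathcal{I}^{(k)}\cup\{t:\|\beta^{(k+1)}_{G_t}\|\ge w_t\}$, or Option II: with $u^{(k+1)}=\widehat{L}(\mathcal{I}^{(k)})(\widehat{L}(\mathcal{I}^{(k)})^\top\widehat{L}(\mathcal{I}^{(k)}))^{-1}\beta^{(k+1)}$, $\mathcal{I}^{(k+1)}=\mathcal{I}^{(k)}\cup\{t:\|u^{(k+1)}_{J_t}\|\ge 1\}$. Since $\mathcal{I}^{(k)}$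 is nondecreasing in a finite set it stabilizes at some $\bar{\mathcal{I}}$; write $\bar{\mathcal{E}}=\mathcal{E}(\bar{\mathcal{I}})$ and $\bar T=T(\bar{\mathcal{I}})$. *)

From HB Require Import structures.
From mathcomp Require Import all_boot all_order all_algebra.
From mathcomp Require Import all_classical all_reals all_analysis.
Set Implicit Arguments. Unset Strict Implicit. Unset Printing Implicit Defensive.
Import Order.TTheory GRing.Theory Num.Theory.
Local Open Scope ring_scope.

(* Groups G : 'I_N -> {set 'I_n}; indices are 0-based. *)

Definition lift_dim (n N : nat) (G : 'I_N -> {set 'I_n}) : nat :=
  (\sum_(t < N) #|G t|)%N.

Definition blk_start (n N : nat) (G : 'I_N -> {set 'I_n}) (t : 'I_N) : nat :=
  (\sum_(i < N | (i < t)%N) #|G i|)%N.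

Definition inJ (n N : nat) (G : 'I_N -> {set 'I_n}) (t : 'I_N) (k : nat) : bool :=
  (blk_start G t <= k < blk_start G t + #|G t|)%N.

(* the r-th (0-based) element of G_t in increasing order *)
Definition grp_elt (n N : nat) (G : 'I_N -> {set 'I_n}) (t : 'I_N) (r : nat) : nat :=
  nth 0%N (map val (enum (G t))) r.

(* lifting operator L : (Lx)_{J_t} = w_t x_{G_t} *)
Definition liftL (R : nzRingType) (n N : nat) (G : 'I_N -> {set 'I_n})
  (w : 'I_N -> R) : 'M[R]_(lift_dim G, n) :=
  \matrix_(k, j) \sum_(t < N)
     (if inJ G t k && (grp_elt G t (k - blk_start G t) == j)%N then w t else 0).

Definition blk_norm (R : rcfType) (n N : nat) (G : 'I_N -> {set 'I_n})
  (z : 'cV[R]_(lift_dim G)) (t : 'I_N) : R :=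
  Num.sqrt (\sum_(k < lift_dim G | inJ G t k) z k 0 ^+ 2).

Definition norm12 (R : rcfType) (n N : nat) (G : 'I_N -> {set 'I_n})
  (z : 'cV[R]_(lift_dim G)) : R := \sum_(t < N) blk_norm z t.

Definition sqnorm (R : nzRingType) (m : nat) (v : 'cV[R]_m) : R :=
  \sum_(i < m) v i 0 ^+ 2.

Definition grp_norm (R : rcfType) (n N : nat) (G : 'I_N -> {set 'I_n})
  (v : 'cV[R]_n) (t : 'I_N) : R :=
  Num.sqrt (\sum_(j in G t) v j 0 ^+ 2).

Definition objective (R : rcfType) (m n N : nat) (G : 'I_N -> {set 'I_n})
  (B : 'M[R]_(m, n)) (M : 'M[R]_(lift_dim G, n)) (y : 'cV[R]_m) (lam : R)
  (x : 'cV[R]_n) : R :=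
  (2 * lam)^-1 * sqnorm (B *m x - y) + norm12 (M *m x).

Definition suppE (n N : nat) (G : 'I_N -> {set 'I_n}) (I : {set 'I_N}) : {set 'I_n} :=
  ~: \bigcup_(t | t \notin I) G t.

Definition projT (R : nzRingType) (n N : nat) (G : 'I_N -> {set 'I_n}) (I : {set 'I_N})
  : 'M[R]_n :=
  diag_mx (\row_j (if j \in suppE G I then 1 else 0)).

Definition projTz (R : nzRingType) (n N : nat) (G : 'I_N -> {set 'I_n}) (I : {set 'I_N})
  : 'M[R]_(lift_dim G) :=
  diag_mx (\row_k (if [exists t in I, inJ G t k] then 1 else 0)).

Definition Lhat (R : nzRingType) (n N : nat) (G : 'I_N -> {set 'I_n}) (w : 'I_N -> R)
  (I : {set 'I_N}) : 'M[R]_(lift_dim G, n) :=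
  liftL G w - projTz R G I *m liftL G w *m (1%:M - projT R G I).

Definition beta (R : fieldType) (m n : nat) (A : 'M[R]_(m, n)) (y : 'cV[R]_m) (lam : R)
  (x : 'cV[R]_n) : 'cV[R]_n :=
  - (lam^-1 *: (A^T *m (A *m x - y))).

Definition update1 (R : rcfType) (m n N : nat) (G : 'I_N -> {set 'I_n}) (w : 'I_N -> R)
  (A : 'M[R]_(m, n)) (y : 'cV[R]_m) (lam : R) (I : {set 'I_N}) (x : 'cV[R]_n)
  : {set 'I_N} :=
  I :|: [set t | w t <= grp_norm G (beta A y lam x) t].

Definition uvec (R : rcfType) (m n N : nat) (G : 'I_N -> {set 'I_n}) (w : 'I_N -> R)
  (A : 'M[R]_(m, n)) (y : 'cV[R]_m) (lam : R) (I : {set 'I_N}) (x : 'cV[R]_n)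
  : 'cV[R]_(lift_dim G) :=
  Lhat G w I *m invmx ((Lhat G w I)^T *m Lhat G w I) *m beta A y lam x.

Definition update2 (R : rcfType) (m n N : nat) (G : 'I_N -> {set 'I_n}) (w : 'I_N -> R)
  (A : 'M[R]_(m, n)) (y : 'cV[R]_m) (lam : R) (I : {set 'I_N}) (x : 'cV[R]_n)
  : {set 'I_N} :=
  I :|: [set t | 1 <= blk_norm (uvec G w A y lam I x) t].

From HB Require Import structures.
From mathcomp Require Import all_boot all_order all_algebra.
From mathcomp Require Import all_classical all_reals all_analysis.
From mathcomp Require Import zify ring lra.
Set Implicit Arguments. Unset Strict Implicit. Unset Printing Implicit Defensive.
Import Order.TTheory GRing.Theory Num.Theory.
Import numFieldNormedType.Exports.
Local Open Scope ring_scope.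

(* The restricted minimality of x~ on T(I) gives, by convexity, the first-order
   inequality <beta(x~), z - x~> <= g(z) - g(x~) for z in T(I), g the group penalty.
   Since no group outside I is added after stabilisation, the update rule bounds
   ||beta_{G_t}|| by w_t (Option I), resp. ||u_{J_t}|| by 1 (Option II), for t outside I
   along the tail, hence at the limit x~.  By Cauchy-Schwarz (through beta = \hat L^T u
   for Option II) this gives <beta(x~), d> <= sum_{t notin I} w_t ||d_{G_t}|| for d in
   T(I)^perp.  Splitting x = P x + (x - P x), P the projection onto T(I), and adding
   both inequalities to the convexity of the quadratic term yields F(x~) <= F(x). *)

Section EuclideanNorm.
Variable R : rcfType.

Definition l2norm (I : finType) (P : pred I) (a : I -> R) : R :=
  Num.sqrt (\sum_(i | P i) a i ^+ 2).

Variables (I : finType) (P : pred I).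
Implicit Types a b : I -> R.

Lemma l2norm_ge0 a : 0 <= l2norm P a.
Proof. exact: sqrtr_ge0. Qed.

Lemma sumr_sqr_ge0 a : 0 <= \sum_(i | P i) a i ^+ 2.
Proof. by apply: sumr_ge0 => i _; exact: sqr_ge0. Qed.

(* Lagrange's identity: the squared minors a_i b_j - a_j b_i sum to
   2 (|a|^2 |b|^2 - <a, b>^2). *)
Lemma sum_mul_le_l2norm a b :
  \sum_(i | P i) a i * b i <= l2norm P a * l2norm P b.
Proof.
set S := \sum_(i | P i) a i * b i.
set A := \sum_(i | P i) a i ^+ 2; set B := \sum_(i | P i) b i ^+ 2.
have A0 : 0 <= A := sumr_sqr_ge0 a.
have minors i : \sum_(j | P j) (a i * b j - a j * b i) ^+ 2
    = a i ^+ 2 * B + A * b i ^+ 2 - 2 * (a i * b i * S).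
  transitivity (\sum_(j | P j) (a i ^+ 2 * b j ^+ 2 + a j ^+ 2 * b i ^+ 2
                               - 2 * (a i * b i * (a j * b j)))).
    by apply: eq_bigr => j _; ring.
  by rewrite sumrB big_split /= !mulr_sumr mulr_suml.
have : 0 <= \sum_(i | P i) \sum_(j | P j) (a i * b j - a j * b i) ^+ 2.
  by apply: sumr_ge0 => i _; apply: sumr_ge0 => j _; exact: sqr_ge0.
rewrite (eq_bigr _ (fun i _ => minors i)) sumrB big_split /=.
rewrite -mulr_suml -mulr_sumr -mulr_sumr -mulr_suml -/A -/B -/S => lagrange.
have S2 : S ^+ 2 <= A * B by nra.
apply: le_trans (ler_norm S) _.
by rewrite -sqrtr_sqr -sqrtrM //; exact: ler_wsqrtr.
Qed.

Lemma l2normD_le a b :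
  l2norm P (fun i => a i + b i) <= l2norm P a + l2norm P b.
Proof.
rewrite -(ler_pXn2r (n:=2)) ?nnegrE ?addr_ge0 ?l2norm_ge0 //.
rewrite sqrrD !sqr_sqrtr ?sumr_sqr_ge0 //.
under eq_bigr do rewrite sqrrD.
rewrite !big_split /= mulr2n.
have := sum_mul_le_l2norm a b; lra.
Qed.

Lemma l2normZ c a : l2norm P (fun i => c * a i) = `|c| * l2norm P a.
Proof.
rewrite /l2norm; under eq_bigr do rewrite exprMn.
by rewrite -mulr_sumr sqrtrM ?sqr_ge0 // sqrtr_sqr.
Qed.

Lemma l2norm_convex s a b : 0 <= s <= 1 ->
  l2norm P (fun i => (1 - s) * a i + s * b i)
  <= (1 - s) * l2norm P a + s * l2norm P b.
Proof.
case/andP=> s0 s1; apply: le_trans (l2normD_le _ _) _.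
by rewrite !l2normZ !ger0_norm ?subr_ge0.
Qed.

Lemma l2norm_le a b : (forall i, P i -> a i ^+ 2 <= b i ^+ 2) ->
  l2norm P a <= l2norm P b.
Proof. by move=> ab; apply/ler_wsqrtr/ler_sum. Qed.

End EuclideanNorm.
Arguments l2norm {R I}.

Section ColumnDot.
Variable R : comNzRingType.

Definition dotc k (u v : 'cV[R]_k) : R := \sum_i u i 0 * v i 0.

Implicit Types k : nat.

Lemma dotcE k (u v : 'cV[R]_k) : dotc u v = (u^T *m v) 0 0.
Proof. by rewrite mxE; apply: eq_bigr => i _; rewrite mxE. Qed.

Lemma dotcC k (u v : 'cV[R]_k) : dotc u v = dotc v u.
Proof. by apply: eq_bigr => i _; rewrite mulrC. Qed.

Lemma dotcDr k (u v v' : 'cV[R]_k) : dotc u (v + v') = dotc u v + dotc u v'.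
Proof. by rewrite /dotc -big_split; apply: eq_bigr => i _; rewrite mxE mulrDr. Qed.

Lemma dotcZr k c (u v : 'cV[R]_k) : dotc u (c *: v) = c * dotc u v.
Proof. by rewrite /dotc mulr_sumr; apply: eq_bigr => i _; rewrite mxE mulrCA. Qed.

Lemma dotc_trmx k l (B : 'M[R]_(l, k)) (u : 'cV_l) (v : 'cV_k) :
  dotc (B^T *m u) v = dotc u (B *m v).
Proof. by rewrite dotcE [RHS]dotcE trmx_mul trmxK mulmxA. Qed.

Lemma sqnorm_dotc k (v : 'cV[R]_k) : sqnorm v = dotc v v.
Proof. by apply: eq_bigr => i _; rewrite expr2. Qed.

Lemma sqnormD k (u v : 'cV[R]_k) : sqnorm (u + v) = sqnorm u + 2 * dotc u v + sqnorm v.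
Proof.
rewrite /sqnorm /dotc mulr_sumr -!big_split /=.
by apply: eq_bigr => i _; rewrite mxE; ring.
Qed.

Lemma sqnormZ k c (v : 'cV[R]_k) : sqnorm (c *: v) = c ^+ 2 * sqnorm v.
Proof. by rewrite /sqnorm mulr_sumr; apply: eq_bigr => i _; rewrite mxE exprMn. Qed.

End ColumnDot.

Lemma sqnorm_ge0 (R : realDomainType) k (v : 'cV[R]_k) : 0 <= sqnorm v.
Proof. by apply: sumr_ge0 => i _; exact: sqr_ge0. Qed.

Lemma sqnorm_eq0 (R : realDomainType) k (v : 'cV[R]_k) : sqnorm v = 0 -> v = 0.
Proof.
move=> s0; have v0 := psumr_eq0P (fun j _ => sqr_ge0 (v j 0)) s0.
by apply/colP => i; rewrite mxE; apply/eqP; rewrite -sqrf_eq0 v0.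
Qed.

Lemma gram_unitmx (R : realFieldType) k l (B : 'M[R]_(l, k)) :
  (forall c : 'cV_k, B *m c = 0 -> c = 0) -> B^T *m B \in unitmx.
Proof.
move=> Binj; rewrite unitmxE unitfE; apply/negP => /det0P [v].
rewrite -trmx_eq0 => /eqP nz vM; apply/nz/Binj/sqnorm_eq0.
by rewrite sqnorm_dotc dotcE trmx_mul trmxK mulmxA -(mulmxA v) vM mul0mx mxE.
Qed.

Section Blocks.
Variables (R : rcfType) (n N : nat) (G : 'I_N -> {set 'I_n}) (w : 'I_N -> R).

Lemma blk_startS (t : 'I_N) :
  (blk_start G t + #|G t| = \sum_(s < N | (s <= t)%N) #|G s|)%N.
Proof.
rewrite /blk_start [RHS](bigD1 t) //= addnC; congr (_ + _)%N.
by apply: eq_bigl => s; rewrite -val_eqE ltn_neqAle andbC.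
Qed.

Lemma blk_start_le (s t : 'I_N) :
  (s < t)%N -> (blk_start G s + #|G s| <= blk_start G t)%N.
Proof.
move=> st; rewrite blk_startS /blk_start.
by apply: (sub_le_big leqnn (fun x y => leq_addr y x)) => i /leq_ltn_trans; apply.
Qed.

Lemma blk_end_le (t : 'I_N) : (blk_start G t + #|G t| <= lift_dim G)%N.
Proof.
by rewrite blk_startS /lift_dim; exact: (sub_le_big leqnn (fun x y => leq_addr y x)).
Qed.

Lemma inJ_inj (s t : 'I_N) k : inJ G s k -> inJ G t k -> s = t.
Proof.
rewrite /inJ => /andP [s1 s2] /andP [t1 t2].
case: (ltngtP s t) => [st|ts|/val_inj //].
  by have := blk_start_le st; lia.
by have := blk_start_le ts; lia.
Qed.

Lemma blk_idx_subproof (t : 'I_N) (i : 'I_#|G t|) :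
  (blk_start G t + i < lift_dim G)%N.
Proof. by apply: leq_trans (blk_end_le t); rewrite ltn_add2l. Qed.

Definition blk_idx (t : 'I_N) (i : 'I_#|G t|) : 'I_(lift_dim G) :=
  Ordinal (blk_idx_subproof i).

Lemma blk_idxE t (i : 'I_#|G t|) : blk_idx i = (blk_start G t + i)%N :> nat.
Proof. by []. Qed.

Lemma inJ_blk_idx t (i : 'I_#|G t|) : inJ G t (blk_idx i).
Proof. by rewrite /inJ blk_idxE leq_addr ltn_add2l ltn_ord. Qed.

Lemma big_inJ t (F : 'I_(lift_dim G) -> R) :
  \sum_(k < lift_dim G | inJ G t k) F k = \sum_(i < #|G t|) F (blk_idx i).
Proof.
pose offset (k : 'I_(lift_dim G)) : option 'I_#|G t| := insub (k - blk_start G t)%N.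
rewrite (reindex_omap (@blk_idx t) offset).
  by apply: eq_bigl => i; rewrite inJ_blk_idx /offset /= addKn valK eqxx.
move=> k; rewrite /inJ => /andP [k1 k2].
rewrite /offset insubT /=; first by rewrite ltn_subLR.
by move=> ?; congr Some; apply: val_inj; rewrite /= subnKC.
Qed.

Lemma sum_blocks (F : 'I_(lift_dim G) -> R) :
  (forall k : 'I_(lift_dim G), (forall t, ~~ inJ G t k) -> F k = 0) ->
  \sum_k F k = \sum_t \sum_(k < lift_dim G | inJ G t k) F k.
Proof.
move=> F0; under [RHS]eq_bigr do rewrite big_mkcond.
rewrite exchange_big /=; apply: eq_bigr => k _.
case: (pickP (fun t => inJ G t k)) => [t kt | none].
  rewrite (bigD1 t) //= kt big1 ?addr0 // => s st; case: ifP => // ks.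
  by rewrite (inJ_inj ks kt) eqxx in st.
by rewrite F0 ?big1 // => t; rewrite none.
Qed.

Lemma grp_elt_enum_val t (i : 'I_#|G t|) : grp_elt G t i = enum_val i.
Proof. by rewrite /grp_elt (nth_map (enum_val i)) -?cardE // -enum_val_nth. Qed.

Lemma liftL_blk_idx t (i : 'I_#|G t|) j :
  liftL G w (blk_idx i) j = if enum_val i == j then w t else 0.
Proof.
rewrite mxE (bigD1 t) //= inJ_blk_idx /= addKn grp_elt_enum_val val_eqE.
rewrite big1 ?addr0 // => s st; case: ifP => // /andP [si _].
by rewrite (inJ_inj si (inJ_blk_idx i)) eqxx in st.
Qed.

Lemma mul_liftL_blk_idx t (i : 'I_#|G t|) (v : 'cV[R]_n) :
  (liftL G w *m v) (blk_idx i) 0 = w t * v (enum_val i) 0.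
Proof.
rewrite mxE (bigD1 (enum_val i)) //= liftL_blk_idx eqxx big1 ?addr0 // => j ij.
by rewrite liftL_blk_idx eq_sym (negbTE ij) mul0r.
Qed.

Lemma mul_liftL_outside (k : 'I_(lift_dim G)) (v : 'cV[R]_n) :
  (forall t, ~~ inJ G t k) -> (liftL G w *m v) k 0 = 0.
Proof.
move=> kJ; rewrite mxE big1 // => j _.
by rewrite mxE big1 ?mul0r // => t _; rewrite (negbTE (kJ t)).
Qed.

Lemma blk_norm_liftL t (v : 'cV[R]_n) :
  0 <= w t -> blk_norm (liftL G w *m v) t = w t * grp_norm G v t.
Proof.
move=> wt0; rewrite /blk_norm /grp_norm big_inJ (big_enum_val (fun j => v j 0 ^+ 2)).
under eq_bigr do rewrite mul_liftL_blk_idx exprMn.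
by rewrite -mulr_sumr sqrtrM ?sqr_ge0 // sqrtr_sqr ger0_norm.
Qed.

End Blocks.

Section Projections.
Variables (R : rcfType) (n N : nat) (G : 'I_N -> {set 'I_n}) (I : {set 'I_N}).

Lemma projT_mul (v : 'cV[R]_n) j :
  (projT R G I *m v) j 0 = if j \in suppE G I then v j 0 else 0.
Proof. by rewrite mul_diag_mx !mxE; case: ifP; rewrite ?mul1r ?mul0r. Qed.

Lemma projT_idem (v : 'cV[R]_n) : projT R G I *m (projT R G I *m v) = projT R G I *m v.
Proof. by apply/colP => j; rewrite !projT_mul; case: (j \in suppE G I). Qed.

Lemma projT_compl_mul (v : 'cV[R]_n) j :
  (v - projT R G I *m v) j 0 = if j \in suppE G I then 0 else v j 0.
Proof. by rewrite mxE [X in _ + X]mxE projT_mul; case: ifP; rewrite ?subrr ?subr0. Qed.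

Lemma notin_suppE t j : t \notin I -> j \in G t -> j \notin suppE G I.
Proof. by move=> tI jG; rewrite finset.in_setC negbK; apply/bigcupP; exists t. Qed.

Lemma projTz_mul_blk (z : 'cV[R]_(lift_dim G)) t (k : 'I_(lift_dim G)) : inJ G t k ->
  (projTz R G I *m z) k 0 = if t \in I then z k 0 else 0.
Proof.
move=> kt; rewrite mul_diag_mx !mxE.
have -> : [exists s in I, inJ G s k] = (t \in I).
  apply/existsP/idP => [[s /andP [sI ks]] | tI]; last by exists t; rewrite tI.
  by rewrite -(inJ_inj ks kt).
by case: ifP; rewrite ?mul1r ?mul0r.
Qed.

Lemma projTz_mul_outside (z : 'cV[R]_(lift_dim G)) (k : 'I_(lift_dim G)) :
  (forall t, ~~ inJ G t k) -> (projTz R G I *m z) k 0 = 0.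
Proof.
move=> kJ; rewrite mul_diag_mx !mxE; case: existsP => [[s /andP [_ ks]]|_].
  by have := kJ s; rewrite ks.
by rewrite mul0r.
Qed.

Variable w : 'I_N -> R.

Lemma Lhat_mul (v : 'cV[R]_n) : Lhat G w I *m v =
  liftL G w *m v - projTz R G I *m (liftL G w *m (v - projT R G I *m v)).
Proof. by rewrite mulmxBl -!mulmxA mulmxBl mul1mx. Qed.

Lemma Lhat_mul_blk_idx t (i : 'I_#|G t|) (v : 'cV[R]_n) :
  (Lhat G w I *m v) (blk_idx i) 0
  = w t * (if (t \in I) && (enum_val i \notin suppE G I) then 0 else v (enum_val i) 0).
Proof.
rewrite Lhat_mul mxE [X in _ + X]mxE (projTz_mul_blk _ (inJ_blk_idx i)).
rewrite !mul_liftL_blk_idx projT_compl_mul.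
by case: (t \in I); case: (enum_val i \in suppE G I); rewrite /= ?(mulr0, subr0, subrr).
Qed.

Lemma Lhat_mul_perp (d : 'cV[R]_n) t (k : 'I_(lift_dim G)) :
  projT R G I *m d = 0 -> inJ G t k ->
  (Lhat G w I *m d) k 0 = if t \in I then 0 else (liftL G w *m d) k 0.
Proof.
move=> Pd kt; rewrite Lhat_mul Pd subr0 mxE [X in _ + X]mxE (projTz_mul_blk _ kt).
by case: ifP; rewrite ?subrr ?subr0.
Qed.

Lemma Lhat_mul_outside (v : 'cV[R]_n) (k : 'I_(lift_dim G)) :
  (forall t, ~~ inJ G t k) -> (Lhat G w I *m v) k 0 = 0.
Proof.
move=> kJ; rewrite Lhat_mul mxE [X in _ + X]mxE projTz_mul_outside //.
by rewrite mul_liftL_outside // subr0.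
Qed.

Hypothesis w_gt0 : forall t, 0 < w t.
Hypothesis G_cover : \bigcup_(t < N) G t = [set: 'I_n].

Lemma Lhat_inj (c : 'cV[R]_n) : Lhat G w I *m c = 0 -> c = 0.
Proof.
move=> Lc0; apply/colP => j; rewrite mxE.
have [t jG tI] : exists2 t, j \in G t & (t \in I) ==> (j \in suppE G I).
  have [jE|jE] := boolP (j \in suppE G I).
    have : j \in \bigcup_(t < N) G t by rewrite G_cover inE.
    by case/bigcupP => t _ jG; exists t; rewrite ?jE ?implybT.
  move: (jE); rewrite finset.in_setC negbK => /bigcupP [t tI jG].
  by exists t; rewrite // (negbTE tI).
move/colP: Lc0 => /(_ (blk_idx (enum_rank_in jG j))).
rewrite Lhat_mul_blk_idx enum_rankK_in // mxE.
move: tI; case: (t \in I); case: (j \in suppE G I) => //= _ /eqP;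
  by rewrite mulf_eq0 (gt_eqF (w_gt0 t)) => /eqP.
Qed.

Lemma uvecK m (A : 'M[R]_(m, n)) y lam x :
  (Lhat G w I)^T *m uvec G w A y lam I x = beta A y lam x.
Proof.
have U : (Lhat G w I)^T *m Lhat G w I \in unitmx by apply: gram_unitmx; exact: Lhat_inj.
by rewrite /uvec !mulmxA mulmxV // mul1mx.
Qed.

End Projections.

Lemma ge0_of_affine_ge0 (R : realFieldType) (a b : R) :
  (forall s, 0 < s <= 1 -> 0 <= a + s * b) -> 0 <= a.
Proof.
move=> ab; rewrite leNgt; apply/negP => a0.
have [b0|b0] := lerP b 0; first by have := ab 1; rewrite ltr01 lexx mul1r => /(_ isT); lra.
(* at s = -a / (b - a) the affine function takes the negative value -a^2 / (b - a) *)
have ba : 0 < b - a by lra.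
have s01 : 0 < - a / (b - a) <= 1.
  by rewrite divr_gt0 ?oppr_gt0 // ler_pdivrMr // mul1r; lra.
have := ab _ s01.
have -> : a + - a / (b - a) * b = - (a ^+ 2 / (b - a)) by field; rewrite gt_eqF.
have a2 : 0 < a ^+ 2 by rewrite expr2; nra.
by rewrite oppr_ge0 leNgt divr_gt0.
Qed.

Section Optimality.
Variables (R : rcfType) (m n N : nat) (G : 'I_N -> {set 'I_n}) (w : 'I_N -> R).
Variables (A : 'M[R]_(m, n)) (y : 'cV[R]_m) (lam : R) (I : {set 'I_N}).
Hypothesis w_gt0 : forall t, 0 < w t.
Hypothesis lam_gt0 : 0 < lam.

Local Notation P := (projT R G I).

Definition fit (x : 'cV[R]_n) : R := (2 * lam)^-1 * sqnorm (A *m x - y).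

Definition penalty (x : 'cV[R]_n) : R := \sum_t w t * grp_norm G x t.

Lemma objective_liftL x : objective A (liftL G w) y lam x = fit x + penalty x.
Proof.
congr (_ + _); apply: eq_bigr => t _; exact/blk_norm_liftL/ltW.
Qed.

Lemma objective_projT x :
  objective (A *m P) (liftL G w *m P) y lam x = objective A (liftL G w) y lam (P *m x).
Proof. by rewrite /objective -!mulmxA. Qed.

Lemma fitD x e :
  fit (x + e) = fit x - dotc (beta A y lam x) e + (2 * lam)^-1 * sqnorm (A *m e).
Proof.
rewrite /fit /beta (mulmxDr A x e) (addrAC (A *m x)) sqnormD.
rewrite [dotc (- _) e]dotcC -scaleNr dotcZr [dotc e _]dotcC dotc_trmx.
by field; rewrite gt_eqF.
Qed.

Lemma fit_ge_linear x e : fit x - dotc (beta A y lam x) e <= fit (x + e).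
Proof.
rewrite fitD lerDl mulr_ge0 ?sqnorm_ge0 // invr_ge0 mulr_ge0 //; exact: ltW.
Qed.

Lemma penalty_convex x z s : 0 <= s <= 1 ->
  penalty (x + s *: (z - x)) <= (1 - s) * penalty x + s * penalty z.
Proof.
move=> s01; rewrite /penalty !mulr_sumr -big_split /=; apply: ler_sum => t _.
have -> : grp_norm G (x + s *: (z - x)) t
    = l2norm (mem (G t)) (fun j => (1 - s) * x j 0 + s * z j 0).
  by congr Num.sqrt; apply: eq_bigr => j _; rewrite !mxE; congr (_ ^+ 2); ring.
rewrite mulrCA [s * _]mulrCA -mulrDr ler_wpM2l ?(ltW (w_gt0 t)) //.
exact: l2norm_convex.
Qed.

Lemma penalty_projT_le x :
  penalty (P *m x) + \sum_(t | t \notin I) w t * grp_norm G (x - P *m x) t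
  <= penalty x.
Proof.
rewrite /penalty [X in _ + X <= _]big_mkcond -big_split /=; apply: ler_sum => t _.
have [tI|tI] /= := boolP (t \in I).
  rewrite addr0 ler_wpM2l ?(ltW (w_gt0 t)) //; apply: l2norm_le => j _.
  by rewrite projT_mul; case: ifP; rewrite ?expr0n ?sqr_ge0.
have Px0 : grp_norm G (P *m x) t = 0.
  rewrite /grp_norm big1 ?sqrtr0 // => j jG.
  by rewrite projT_mul (negbTE (notin_suppE tI jG)) expr0n.
rewrite Px0 mulr0 add0r ler_wpM2l ?(ltW (w_gt0 t)) //; apply: l2norm_le => j jG.
by rewrite projT_compl_mul (negbTE (notin_suppE tI jG)).
Qed.

(* The part of the optimality condition of the full problem that concerns T(I)^perp. *)
Definition dual_feasible (b : 'cV[R]_n) : Prop :=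
  forall d, P *m d = 0 -> dotc b d <= \sum_(t | t \notin I) w t * grp_norm G d t.

Section RestrictedMinimizer.
Variable xt : 'cV[R]_n.
Hypothesis xt_in_T : P *m xt = xt.
Hypothesis xt_min : forall z, P *m z = z -> fit xt + penalty xt <= fit z + penalty z.

Lemma restricted_first_order z : P *m z = z ->
  dotc (beta A y lam xt) (z - xt) <= penalty z - penalty xt.
Proof.
move=> Pz; rewrite -subr_ge0; set e := z - xt.
set q := (2 * lam)^-1 * sqnorm (A *m e).
apply: (@ge0_of_affine_ge0 _ _ q) => s /andP [s0 s1].
have Pzs : P *m (xt + s *: e) = xt + s *: e.
  by rewrite mulmxDr -scalemxAr mulmxBr Pz xt_in_T.
have := penalty_convex xt z (s := s); rewrite ltW //= -/e => /(_ s1) conv.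
have := xt_min Pzs; rewrite fitD dotcZr -scalemxAr sqnormZ mulrCA -/q.
rewrite -(pmulr_rge0 _ s0); nra.
Qed.

Lemma restricted_min_global : dual_feasible (beta A y lam xt) ->
  forall x, fit xt + penalty xt <= fit x + penalty x.
Proof.
move=> feas x; set d := x - P *m x.
have Pd : P *m d = 0 by rewrite mulmxBr projT_idem subrr.
have fitx := fit_ge_linear xt ((P *m x - xt) + d).
have xE : xt + ((P *m x - xt) + d) = x.
  by rewrite addrA [xt + _]addrC subrK /d addrC subrK.
rewrite xE dotcDr in fitx.
have := restricted_first_order (projT_idem G I x).
have := penalty_projT_le x; have := feas d Pd; lra.
Qed.

End RestrictedMinimizer.

Lemma dual_feasible_grp_norm b :
  (forall t, t \notin I -> grp_norm G b t <= w t) -> dual_feasible b.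
Proof.
move=> bw d Pd.
have dE j : j \in suppE G I -> d j 0 = 0.
  by move=> jE; move/colP: Pd => /(_ j); rewrite projT_mul jE mxE.
(* charge each coordinate outside E(I) to one group containing it *)
pose owner j := [pick t | (t \notin I) && (j \in G t)].
pose dt t j := if owner j == Some t then d j 0 else 0.
have owner_split j : b j 0 * d j 0
    = \sum_(t | t \notin I) (if j \in G t then b j 0 * dt t j else 0).
  rewrite /dt /owner; case: pickP => [t0 /andP [t0I jG0] | none].
    rewrite (bigD1 t0) //= jG0 eqxx big1 ?addr0 // => t /andP [_ tt0].
    by case: ifP => _ //; rewrite (inj_eq Some_inj) eq_sym (negbTE tt0) mulr0.
  rewrite dE ?mulr0 ?big1 // => [t _|]; first by case: ifP => _ //; rewrite if_same mulr0.
  by rewrite finset.in_setC; apply/bigcupP => -[t tI jG]; have := none t; rewrite tI jG.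
rewrite /dotc (eq_bigr _ (fun j _ => owner_split j)) exchange_big /=.
apply: ler_sum => t tI; rewrite -big_mkcond /=.
apply: le_trans (sum_mul_le_l2norm _ _ _) _.
apply: ler_pM; rewrite ?l2norm_ge0 //; first exact: bw.
apply: l2norm_le => j _; rewrite /dt; case: ifP => _ //.
by rewrite expr0n sqr_ge0.
Qed.

Lemma dual_feasible_uvec x : \bigcup_(t < N) G t = [set: 'I_n] ->
  (forall t, t \notin I -> blk_norm (uvec G w A y lam I x) t <= 1) ->
  dual_feasible (beta A y lam x).
Proof.
move=> G_cover u1 d Pd; set u := uvec G w A y lam I x.
rewrite -(uvecK I w_gt0 G_cover A y lam x) dotc_trmx -/u /dotc.
rewrite (sum_blocks (F := fun k => u k 0 * (Lhat G w I *m d) k 0)); last first.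
  by move=> k kJ; rewrite Lhat_mul_outside ?mulr0.
rewrite (bigID (mem I)) /= big1 ?add0r => [|t tI]; last first.
  by rewrite big1 // => k kt; rewrite (Lhat_mul_perp _ Pd kt) tI mulr0.
apply: ler_sum => t tI.
under eq_bigr => k kt do rewrite (Lhat_mul_perp _ Pd kt) (negbTE tI).
apply: le_trans (sum_mul_le_l2norm _ _ _) _.
rewrite -[l2norm _ _ * _]/(blk_norm u t * blk_norm (liftL G w *m d) t).
rewrite blk_norm_liftL ?(ltW (w_gt0 t)) //.
by apply: ler_piMl; [rewrite mulr_ge0 ?sqrtr_ge0 ?(ltW (w_gt0 t)) | exact: u1].
Qed.

End Optimality.

Section StableUpdate.
Variable R : realType.

Lemma continuous_affine_coord p n (B : 'M[R]_(p, n)) (c : 'cV[R]_p) i :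
  continuous (fun x : 'cV[R]_n => (B *m x + c) i 0).
Proof.
have -> : (fun x : 'cV[R]_n => (B *m x + c) i 0)
    = (fun x => \sum_j B i j * x j 0 + c i 0).
  by apply/funext => x; rewrite !mxE.
move=> x; apply: continuousD; last exact: cst_continuous.
apply: cvg_big; [exact: add_continuous | exact: nbhs_filter | move=> j _].
by apply: cvgMl_tmp; [exact: nbhs_filter | exact: coord_continuous].
Qed.

Lemma continuous_l2norm_affine p n (S : pred 'I_p) (B : 'M[R]_(p, n)) (c : 'cV[R]_p) :
  continuous (fun x : 'cV[R]_n => l2norm S (fun i => (B *m x + c) i 0)).
Proof.
move=> x; apply: (continuous_comp (g := Num.sqrt)); last exact: sqrt_continuous.
apply: cvg_big; [exact: add_continuous | exact: nbhs_filter | move=> i _].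
by apply: cvgM; [exact: nbhs_filter | exact: continuous_affine_coord ..].
Qed.

Variables (n N : nat) (c : 'I_N -> R) (phi : {set 'I_N} -> 'I_N -> 'cV[R]_n -> R).
Variables (Iseq : nat -> {set 'I_N}) (xseq : nat -> 'cV[R]_n).
Variables (Ibar : {set 'I_N}) (xt : 'cV[R]_n).
Hypothesis Iseq_upd :
  forall k, Iseq k.+1 = Iseq k :|: [set t | c t <= phi (Iseq k) t (xseq k.+1)].
Hypothesis Iseq_stab : exists K, forall k, (K <= k)%N -> Iseq k = Ibar.
Hypothesis xseq_cvg : (xseq @ \oo --> xt)%classic.

(* Once the index sets are stable, the update rejects [t] at every step, so the strict
   bound holds along the tail and passes to the limit. *)
Lemma stable_update_le t : {for xt, continuous (phi Ibar t)} -> t \notin Ibar ->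
  phi Ibar t xt <= c t.
Proof.
move=> phic tI; have [K stab] := Iseq_stab.
apply: (cvgr_to_le (F := eventually) (f := fun k => phi Ibar t (xseq k.+1))).
  by apply: continuous_cvg => //; rewrite (cvg_shiftS xseq).
exists K => // k /= Kk; have : t \notin Iseq k.+1 by rewrite stab // leqW.
by rewrite Iseq_upd (stab k Kk) !inE negb_or -ltNge => /andP [_ /ltW].
Qed.

End StableUpdate.

Lemma beta_affine (R : fieldType) m n (A : 'M[R]_(m, n)) y lam x :
  beta A y lam x = (- lam^-1 *: (A^T *m A)) *m x + lam^-1 *: (A^T *m y).
Proof.
rewrite /beta mulmxBr scalerBr opprB addrC; congr (_ + _).
by rewrite -scalemxAl mulmxA scaleNr.
Qed.

Section ScoreContinuity.
Variables (R : realType) (m n N : nat) (G : 'I_N -> {set 'I_n}) (w : 'I_N -> R).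
Variables (A : 'M[R]_(m, n)) (y : 'cV[R]_m) (lam : R).

Lemma continuous_grp_norm_beta t :
  continuous (fun x => grp_norm G (beta A y lam x) t).
Proof.
set B := - lam^-1 *: (A^T *m A); set c := lam^-1 *: (A^T *m y).
have -> : (fun x => grp_norm G (beta A y lam x) t)
    = (fun x => l2norm (mem (G t)) (fun j => (B *m x + c) j 0)).
  by apply/funext => x; rewrite beta_affine.
exact: continuous_l2norm_affine.
Qed.

Lemma continuous_blk_norm_uvec I t :
  continuous (fun x => blk_norm (uvec G w A y lam I x) t).
Proof.
set M := Lhat G w I *m invmx ((Lhat G w I)^T *m Lhat G w I).
set B := M *m (- lam^-1 *: (A^T *m A)); set c := M *m (lam^-1 *: (A^T *m y)).
have -> : (fun x => blk_norm (uvec G w A y lam I x) t)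
    = (fun x => l2norm (fun k : 'I_(lift_dim G) => inJ G t k)
                       (fun k => (B *m x + c) k 0)).
  by apply/funext => x; rewrite /uvec beta_affine mulmxDr mulmxA.
exact: continuous_l2norm_affine.
Qed.

End ScoreContinuity.

Theorem proposition4p2 (R : realType) (m n N : nat)
  (G : 'I_N -> {set 'I_n}) (w : 'I_N -> R)
  (A : 'M[R]_(m, n)) (y : 'cV[R]_m) (lam : R)
  (HGne : forall t, exists j, j \in G t)
  (HGcov : \bigcup_(t < N) G t = [set: 'I_n])
  (Hw : forall t, 0 < w t) (Hlam : 0 < lam)
  (Iseq : nat -> {set 'I_N}) (xseq : nat -> 'cV[R]_n)
  (Hupd : (forall k, Iseq k.+1 = update1 G w A y lam (Iseq k) (xseq k.+1))
       \/ (forall k, Iseq k.+1 = update2 G w A y lam (Iseq k) (xseq k.+1)))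
  (Ibar : {set 'I_N})
  (Hstab : exists K, forall k, (K <= k)%N -> Iseq k = Ibar)
  (xt : 'cV[R]_n)
  (Hcvg : (xseq @ \oo --> xt)%classic)
  (Hmin : forall x : 'cV[R]_n,
     objective (A *m projT R G Ibar) (liftL G w *m projT R G Ibar) y lam xt
     <= objective (A *m projT R G Ibar) (liftL G w *m projT R G Ibar) y lam x)
  (Hzero : forall i : 'I_n, i \notin suppE G Ibar -> xt i 0 = 0) :
  forall x : 'cV[R]_n,
    objective A (liftL G w) y lam xt <= objective A (liftL G w) y lam x.
Proof.
have xt_in_T : projT R G Ibar *m xt = xt.
  by apply/colP => j; rewrite projT_mul; case: ifP => // /negbT /Hzero ->.
have xt_min z : projT R G Ibar *m z = z ->
    fit A y lam xt + penalty G w xt <= fit A y lam z + penalty G w z.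
  by move=> Pz; have := Hmin z; rewrite !objective_projT Pz xt_in_T !objective_liftL.
move=> x; rewrite !objective_liftL //.
apply: restricted_min_global xt_in_T xt_min _ x => //.
case: Hupd => upd.
  apply: dual_feasible_grp_norm => t.
  apply: (stable_update_le (phi := fun _ t x => grp_norm G (beta A y lam x) t)
           upd Hstab Hcvg).
  exact: continuous_grp_norm_beta.
apply: dual_feasible_uvec => // t.
apply: (stable_update_le (c := fun=> 1)
  (phi := fun I t x => blk_norm (uvec G w A y lam I x) t) upd Hstab Hcvg).
exact: continuous_blk_norm_uvec.
Qed.
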